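(* Let $H$ be a binary tree based graph, $M$ a pseudomatching of $H$, and $S$ a set of literals with $Vars(S)=V(H)\setminus\bigcup M$ that is $1$-comfortable w.r.t. $M$. Then for every $S'\in{\bf EC}(S)$, $\Pr(\{S'\})=(1/2)^{|V(H)\setminus Fix(S)|}$.
   Context: Sets of literals never contain a variable together with its negation; $Vars(S)$ is the set of variables occurring in $S$. A rooted tree is extended if none of its leaves has a sibling. A graph $H$ is a binary tree based graph if it is the edge-disjoint union of extended rooted trees $T_1,\dots,T_m$ with roots $t_1,\dots,t_m$ such that every leaf of some $T_i$ is a leaf of exactly two of the trees, and any two trees have at most one common vertex, which is a leaf of both. Vertices are root vertices, leaf vertices, and internal vertices (the rest); two internal vertices are siblings if they are siblings in the tree containing them. $T_i,T_j$ are adjacent if they share a leaf $\ell_{i,j}$; $P_{i,j}$ is the path between $t_i$ and $t_j$ in $T_i\cup T_j$. A pseudoedge is a pair $\{t_i,t_j\}$ with $T_i,T_j$ adjacent; a pseudomatching is a set of pairwise disjoint pseudoedges; $\bigcup M$ is the set of their ends. $\phi_H$ is the CNF on variables $V(H)$ with a clause $C_{i,j}$ (positive literals of $V(P_{i,j})$) for each pseudoedge. $S$ falsifies a clause if all its variables occur negatively in $S$. $S$ respects $\{t_i,t_j\}$ if all non-root variables of $C_{i,j}$ occur negatively in $S$ and the siblings of all internal variables of $C_{i,j}$ occur positively in $S$. $S$ is $1$-comfortable w.r.t. $M$ if it falsifies no clause of $\phi_H$ and respects every pseudoedge of $M$. The positive literal $\ell_{i,j}$ is fixed w.r.t. a set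 $S$ of literals if $\ell_{i,j}\in S$ and all other variables of $C_{i,j}$ occur negatively in $S$; $Fix(S)$ is the set of fixed literals. ${\bf SAT}(H)$ is the set of satisfying assignments of $\phi_H$; each $S'\in{\bf SAT}(H)$ has probability $(1/2)^{|V(H)\setminus Fix(S')|}$. ${\bf EC}(S)=\{S'\in{\bf SAT}(H):S\subseteq S'\}$. *)

From mathcomp Require Import all_boot all_order all_algebra.
Set Implicit Arguments. Unset Strict Implicit. Unset Printing Implicit Defensive.
Import GRing.Theory Num.Theory.

(* Conventions:
   - Vertices (= variables) live in a finite type V; V(H) is the union of
     the vertex sets of the trees (not necessarily all of V).
   - A family of m rooted trees is given by vertex sets, roots and parent
     functions; tree i has vertex set tverts i, root troot i and the
     parent map tpar i (with tpar i root = root).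
   - A literal is a pair (v, b) : V * bool, b = true for the positive literal. *)

Record forest (V : finType) := Forest {
  ntrees : nat;
  tverts : 'I_ntrees -> {set V};
  troot  : 'I_ntrees -> V;
  tpar   : 'I_ntrees -> V -> V }.
Arguments tverts {V} f _.
Arguments troot {V} f _.
Arguments tpar {V} f _ _.

Section Defs.
Variable V : finType.
Variable H : forest V.
Local Notation I := 'I_(ntrees H).
Local Notation VT := (tverts H).
Local Notation rt := (troot H).
Local Notation par := (tpar H).

Definition rooted_tree (i : I) : Prop :=
  [/\ rt i \in VT i,
      (forall v, v \in VT i -> par i v \in VT i),
      par i (rt i) = rt i &
      (forall v, v \in VT i -> exists k, iter k (par i) v = rt i)].

Definition tchild (i : I) (u v : V) : bool :=
  [&& u \in VT i, u != rt i & par i u == v].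

Definition tleaf (i : I) (v : V) : bool :=
  [&& v \in VT i, v != rt i & ~~ [exists u, tchild i u v]].

Definition tsib (i : I) (u v : V) : bool :=
  [&& u \in VT i, v \in VT i, u != v, u != rt i, v != rt i & par i u == par i v].

Definition extended (i : I) : Prop :=
  forall l u, tleaf i l -> ~~ tsib i l u.

Definition tedges (i : I) : {set {set V}} :=
  [set [set v; par i v] | v in VT i :\ rt i].

Definition binary_tree_based : Prop :=
  [/\ (forall i, rooted_tree i /\ extended i),
      (forall i j, i != j -> [disjoint tedges i & tedges j]),
      (forall i l, tleaf i l -> #|[set j | tleaf j l]| = 2) &
      (forall i j, i != j ->
         #|VT i :&: VT j| <= 1 /\
         (forall v, v \in VT i :&: VT j -> tleaf i v /\ tleaf j v))].

Definition VH : {set V} := \bigcup_(i : I) VT i.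

Definition is_root (v : V) : bool := [exists i : I, rt i == v].
Definition is_leaf (v : V) : bool := [exists i : I, tleaf i v].
Definition internal (v : V) : bool := [&& v \in VH, ~~ is_root v & ~~ is_leaf v].

Definition sibling (u v : V) : bool :=
  [&& internal u, internal v & [exists i : I, tsib i u v]].

Definition adjacent (i j : I) : bool :=
  (i != j) && [exists l, tleaf i l && tleaf j l].

Definition anc (i : I) (v : V) : {set V} :=
  [set iter k (par i) v | k : 'I_#|V|.+1].

(* V(P_{i,j}): the path t_i -- l_{i,j} -- t_j in T_i u T_j
   (the variables of the clause C_{i,j}) *)
Definition pathV (i j : I) : {set V} :=
  \bigcup_(l in VT i :&: VT j) (anc i l :|: anc j l).

Definition pseudoedge (e : {set V}) : Prop :=
  exists i j, adjacent i j /\ e = [set rt i; rt j].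

Definition pseudomatching (M : {set {set V}}) : Prop :=
  (forall e, e \in M -> pseudoedge e) /\
  (forall e f, e \in M -> f \in M -> e != f -> [disjoint e & f]).

Definition bigcupM (M : {set {set V}}) : {set V} := \bigcup_(e in M) e.

Definition consistent (S : {set V * bool}) : Prop :=
  forall v, ~ ((v, true) \in S /\ (v, false) \in S).

Definition Vars (S : {set V * bool}) : {set V} :=
  [set v | ((v, true) \in S) || ((v, false) \in S)].

(* S falsifies the (positive) clause with variable set C *)
Definition falsifies (S : {set V * bool}) (C : {set V}) : Prop :=
  forall v, v \in C -> (v, false) \in S.

Definition respects (S : {set V * bool}) (i j : I) : Prop :=
  (forall v, v \in pathV i j -> ~~ is_root v -> (v, false) \in S) /\
  (forall v u, v \in pathV i j -> internal v -> sibling v u -> (u, true) \in S).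

Definition comfortable1 (S : {set V * bool}) (M : {set {set V}}) : Prop :=
  (forall i j, adjacent i j -> ~ falsifies S (pathV i j)) /\
  (forall e, e \in M -> forall i j, adjacent i j -> e = [set rt i; rt j] ->
     respects S i j).

(* satisfying assignments of phi_H: total assignments of V(H) satisfying
   every clause C_{i,j} *)
Definition isSAT (S' : {set V * bool}) : Prop :=
  [/\ consistent S', Vars S' = VH &
      (forall i j, adjacent i j -> exists2 v, v \in pathV i j & (v, true) \in S')].

(* Fix(S), as a set of variables (the fixed positive literals l_{i,j}) *)
Definition Fix (S : {set V * bool}) : {set V} :=
  [set l | ((l, true) \in S) &&
     [exists i : I, exists j : I,
        [&& adjacent i j, l \in VT i :&: VT j &
            [forall v in pathV i j, (v != l) ==> ((v, false) \in S)]]]].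

Definition prob (S' : {set V * bool}) : rat := (1 / 2) ^+ #|VH :\: Fix S'|.

Definition EC (S S' : {set V * bool}) : Prop := isSAT S' /\ S \subset S'.

End Defs.

From mathcomp Require Import all_boot all_order all_algebra.
Set Implicit Arguments. Unset Strict Implicit. Unset Printing Implicit Defensive.

(* It suffices that Fix S' = Fix S. Fixedness of l by C_{i,j} only involves the
   variables of C_{i,j}, and none of them is covered by M: if the root t_i were
   matched to t_q, respect of {t_i, t_q} would make l negative when q = j, and
   otherwise, where the paths to l and to the leaf shared with T_q branch apart
   in T_i, it would make the sibling on the side of l positive, whereas
   fixedness makes it negative. So C_{i,j} lies inside Vars S, on which S and
   S' agree. *)

Section Branching.
Variables (T : finType) (f : T -> T).

Lemma fconnect_branch r a b : f r = r -> fconnect f a r -> fconnect f b r ->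
  [\/ fconnect f a b, fconnect f b a |
      exists x y, [/\ fconnect f a x, fconnect f b y,
                      [&& x != y, x != r & y != r] & f x = f y]].
Proof.
move=> fr ar br.
pose P m := fconnect f b (iter m f a).
have exP : exists m, P m by exists (findex f a r); rewrite /P iter_findex.
case: (ex_minnP exP) => -[|m] Pm minP; first exact: Or32.
pose Q n := iter n f b == iter m.+1 f a.
have exQ : exists n, Q n.
  by exists (findex f b (iter m.+1 f a)); rewrite /Q iter_findex.
case: (ex_minnP exQ) => -[|n] /eqP Qn minQ.
  by apply: Or31; rewrite [b]Qn fconnect_iter.
apply: Or33; exists (iter m f a), (iter n f b).
have notPm : ~~ P m by apply/negP => /minP; rewrite ltnn.
have notQn : ~~ Q n by apply/negP => /minQ; rewrite ltnn.
split; [exact: fconnect_iter | exact: fconnect_iter | apply/and3P; split |].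
- by apply: contra notPm; rewrite /P => /eqP ->; apply: fconnect_iter.
- by apply: contra notPm; rewrite /P => /eqP ->.
- by apply: contra notQn => /eqP e; rewrite /Q -Qn /= e fr.
- exact: esym Qn.
Qed.

End Branching.

Section Forest.
Variables (V : finType) (H : forest V).
Implicit Types (i j p q : 'I_(ntrees H)) (S : {set V * bool}).
Local Notation VT := (tverts H).
Local Notation rt := (troot H).
Local Notation par := (tpar H).

Lemma mem_anc i v x : (x \in anc i v) = fconnect (par i) v x.
Proof.
apply/imsetP/idP => [[k _ ->]|vx]; first exact: fconnect_iter.
have lt_index : findex (par i) v x < #|V|.+1.
  by apply: leq_trans (findex_max vx) _; apply: leq_trans (max_card _) _.
by exists (Ordinal lt_index); rewrite // iter_findex.
Qed.

Lemma pathV_anc i j l v :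
  l \in VT i :&: VT j -> v \in anc i l -> v \in pathV i j.
Proof. by move=> lij vl; apply/bigcupP; exists l; rewrite // inE vl. Qed.

Lemma pathV_leaf i j l : l \in VT i :&: VT j -> l \in pathV i j.
Proof. by move/pathV_anc; apply; rewrite mem_anc connect0. Qed.

Lemma pathV_sym i j : pathV i j = pathV j i.
Proof. by rewrite /pathV setIC; apply: eq_bigr => l _; rewrite setUC. Qed.

Lemma adjacent_sym i j : adjacent i j = adjacent j i.
Proof.
rewrite /adjacent eq_sym; congr (_ && _).
by apply/existsP/existsP => -[l lij]; exists l; rewrite andbC.
Qed.

Lemma respects_sym S i j : respects S i j -> respects S j i.
Proof. by rewrite /respects pathV_sym. Qed.

Definition fixed_by S i j l : Prop :=
  [/\ adjacent i j, l \in VT i :&: VT j, (l, true) \in S &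
      forall v, v \in pathV i j -> v != l -> (v, false) \in S].

Lemma in_Fix S l : l \in Fix H S <-> exists i j, fixed_by S i j l.
Proof.
rewrite inE; split.
  case/andP => lS /existsP [i /existsP [j /and3P [adj lij /forallP fx]]].
  exists i, j; split=> // v vp vl.
  by move/implyP: (fx v) => /(_ vp) /implyP /(_ vl).
case=> i [j [adj lij lS fx]]; rewrite lS /=.
apply/existsP; exists i; apply/existsP; exists j; rewrite adj lij /=.
by apply/forallP => v; apply/implyP => vp; apply/implyP; apply: fx.
Qed.

Lemma fixed_by_sym S i j l : fixed_by S i j l -> fixed_by S j i l.
Proof.
by case=> adj lij lS fx; split; rewrite // 1?adjacent_sym 1?setIC -1?pathV_sym.
Qed.

Lemma Fix_subset S S' : S \subset S' -> Fix H S \subset Fix H S'.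
Proof.
move=> sub; apply/subsetP => l /in_Fix [i [j [adj lij lS fx]]].
apply/in_Fix; exists i, j; split; rewrite ?(subsetP sub) //.
by move=> v vp vl; apply: (subsetP sub); apply: fx.
Qed.

Lemma lit_restrict S S' v b : S \subset S' -> consistent S' ->
  v \in Vars S -> (v, b) \in S' -> (v, b) \in S.
Proof.
move=> sub cons; rewrite inE => vS vb.
case/orP: vS => vS; case: b vb => // vb; case: (cons v); split=> //;
  exact: (subsetP sub).
Qed.

Lemma fixed_by_restrict S S' i j l : S \subset S' -> consistent S' ->
  {subset pathV i j <= Vars S} -> fixed_by S' i j l -> fixed_by S i j l.
Proof.
move=> sub cons pathS [adj lij lS' fx]; split=> //.
  exact: lit_restrict sub cons (pathS _ (pathV_leaf lij)) lS'.
by move=> v vp vl; apply: lit_restrict sub cons (pathS _ vp) (fx v vp vl).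
Qed.

Hypothesis btb : binary_tree_based H.

Lemma tree_axioms i : rooted_tree i /\ extended i.
Proof. by case: btb => h _ _ _; apply: h. Qed.

Lemma root_in i : rt i \in VT i.
Proof. by case: (tree_axioms i) => -[]. Qed.

Lemma par_root i : par i (rt i) = rt i.
Proof. by case: (tree_axioms i) => -[]. Qed.

Lemma fconnect_tree i v x : v \in VT i -> fconnect (par i) v x -> x \in VT i.
Proof.
case: (tree_axioms i) => -[_ closed _ _] _ vi /iter_findex <-.
by elim: findex => //= k; apply: closed.
Qed.

Lemma fconnect_root i v : v \in VT i -> fconnect (par i) v (rt i).
Proof.
case: (tree_axioms i) => -[_ _ _ reach] _ /reach [k <-].
exact: fconnect_iter.
Qed.

Lemma pathV_in i j v : v \in pathV i j -> (v \in VT i) || (v \in VT j).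
Proof.
case/bigcupP => l; rewrite !inE => /andP [li lj] /orP []; rewrite mem_anc => lv.
  by rewrite (fconnect_tree li lv).
by rewrite (fconnect_tree lj lv) orbT.
Qed.

Lemma pathV_VH i j v : v \in pathV i j -> v \in VH H.
Proof. by case/pathV_in/orP => vT; apply/bigcupP; [exists i | exists j]. Qed.

Lemma inter_leaf i j v : i != j -> v \in VT i -> v \in VT j ->
  tleaf i v /\ tleaf j v.
Proof.
by case: btb => _ _ _ h ij vi vj; apply: (proj2 (h i j ij)); rewrite inE vi vj.
Qed.

Lemma tleaf_in p i u : tleaf p u -> u \in VT i -> tleaf i u.
Proof.
move=> lp ui; have [<- // | pi] := eqVneq p i.
by case: (inter_leaf pi _ ui) => //; case/and3P: lp.
Qed.

Lemma root_uniq p i : rt p \in VT i -> p = i.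
Proof.
move=> rpi; apply/eqP; apply: contraT => pi.
by case/and3P: (proj1 (inter_leaf pi (root_in p) rpi)) => _; rewrite eqxx.
Qed.

Lemma pathV_root p i j : rt p \in pathV i j -> p = i \/ p = j.
Proof. by case/pathV_in/orP => /root_uniq; [left | right]. Qed.

Lemma is_root_tree i u : u \in VT i -> is_root H u = (u == rt i).
Proof.
move=> ui; apply/existsP/eqP => [[p /eqP rpu] | ->]; last by exists i.
by move: ui; rewrite -rpu => /root_uniq ->.
Qed.

Lemma internal_tree i u : u \in VT i ->
  internal H u = (u != rt i) && ~~ tleaf i u.
Proof.
move=> ui; rewrite /internal (is_root_tree ui).
have -> : u \in VH H by apply/bigcupP; exists i.
congr (_ && ~~ _); apply/existsP/idP => [[p lp] | lu]; last by exists i.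
exact: tleaf_in lp ui.
Qed.

Lemma leaf_not_root i l : tleaf i l -> ~~ is_root H l.
Proof. by case/and3P => li lr _; rewrite (is_root_tree li). Qed.

Lemma leaf_not_internal i l : tleaf i l -> ~~ internal H l.
Proof. by move=> ll; have /and3P [li _ _] := ll; rewrite (internal_tree li) ll andbF. Qed.

Lemma tsib_sym i u w : tsib i u w -> tsib i w u.
Proof.
by case/and5P => ui wi uw ur /andP [wr e]; rewrite /tsib ui wi eq_sym uw ur wr eq_sym e.
Qed.

Lemma tsib_internal i u w : tsib i u w -> internal H u.
Proof.
move=> s; have /and5P [ui _ _ ur _] := s.
rewrite (internal_tree ui) ur /=; apply/negP => lu.
by case: (tree_axioms i) => _ /(_ u w lu); rewrite s.
Qed.

Lemma tsib_sibling i u w : tsib i u w -> sibling H u w.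
Proof.
move=> s; rewrite /sibling (tsib_internal s) (tsib_internal (tsib_sym s)).
by apply/existsP; exists i.
Qed.

Lemma leaf_descendant i a b : tleaf i b -> a \in VT i ->
  fconnect (par i) a b -> a = b.
Proof.
move=> lb ai /iter_findex; case: findex => [//|k] /= eb; exfalso.
case/and3P: lb => _ br /existsP; apply; exists (iter k (par i) a).
have ci : iter k (par i) a \in VT i by apply: fconnect_tree ai (fconnect_iter _ _ _).
rewrite /tchild ci eb eqxx andbT /=.
by apply: contra_neq br => cr; rewrite -eb cr par_root.
Qed.

Lemma leaves_sibling_ancestors i a b : a != b -> tleaf i a -> tleaf i b ->
  exists c1 c2, [/\ c1 \in anc i a, c2 \in anc i b & tsib i c1 c2].
Proof.
move=> ab la lb; have /and3P [ai _ _] := la; have /and3P [bi _ _] := lb.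
case: (fconnect_branch (par_root i) (fconnect_root ai) (fconnect_root bi)).
- by move/(leaf_descendant lb ai)/eqP; rewrite (negbTE ab).
- by move/(leaf_descendant la bi)/eqP; rewrite eq_sym (negbTE ab).
case=> x [y [ax bx /and3P [xy xr yr] fxy]].
exists x, y; rewrite !mem_anc; split=> //.
by rewrite /tsib (fconnect_tree ai ax) (fconnect_tree bi bx) xy xr yr fxy eqxx.
Qed.

Lemma leaf_third_tree i j q l : tleaf i l -> tleaf j l -> tleaf q l ->
  i != j -> i != q -> q = j.
Proof.
move=> li lj lq ij iq; apply/eqP; apply: contraT => qj.
case: btb => _ _ /(_ i l li) two _.
have : 2 < #|[set p : 'I_(ntrees H) | tleaf p l]|.
  apply/card_gt2P; exists i, j, q; rewrite !inE li lj lq.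
  by split; split; rewrite // eq_sym.
by rewrite two.
Qed.

Lemma fixed_by_not_respects S S' i j q l : S \subset S' -> consistent S' ->
  fixed_by S' i j l -> adjacent i q -> ~ respects S i q.
Proof.
move=> sub cons [adj lij lS' fx] adjq [neg_path pos_sib].
have ij : i != j by case/andP: adj.
have [li lj] : l \in VT i /\ l \in VT j by apply/andP; rewrite -in_setI.
have [lli llj] := inter_leaf ij li lj.
have [qj | qj] := eqVneq q j.
  subst q; case: (cons l); split=> //; apply: (subsetP sub).
  exact: neg_path (pathV_leaf lij) (leaf_not_root lli).
case/andP: adjq => iq /existsP [b /andP [lbi lbq]].
have lb : l != b.
  by apply: contra_neq qj => lb; subst b; apply: leaf_third_tree lli llj lbq ij iq.
have [c1 [c2 [c1l c2b /tsib_sym s21]]] := leaves_sibling_ancestors lb lli lbi.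
have biq : b \in VT i :&: VT q.
  by rewrite inE; case/and3P: lbi => -> _ _; case/and3P: lbq.
have c1S : (c1, true) \in S.
  exact: pos_sib (pathV_anc biq c2b) (tsib_internal s21) (tsib_sibling s21).
have c1l' : c1 != l.
  by apply: contraTneq (tsib_internal (tsib_sym s21)) => ->; apply: leaf_not_internal lli.
case: (cons c1); split; first exact: (subsetP sub).
exact: fx (pathV_anc lij c1l) c1l'.
Qed.

Lemma fixed_by_unmatched M S S' i j l v :
  pseudomatching H M -> comfortable1 H S M -> S \subset S' -> consistent S' ->
  fixed_by S' i j l -> v \in pathV i j -> v \notin bigcupM M.
Proof.
move=> [pm_edge _] [_ pm_resp] sub cons fx vp; apply/bigcupP => -[e eM ve].
have [p [q [apq epq]]] := pm_edge e eM.
have resp := pm_resp e eM p q apq epq.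
have unrespected p' q' : rt p' = v -> adjacent p' q' -> ~ respects S p' q'.
  move=> rpv; have : rt p' \in pathV i j by rewrite rpv.
  case/pathV_root => ->.
    exact: fixed_by_not_respects sub cons fx.
  exact: fixed_by_not_respects sub cons (fixed_by_sym fx).
move: ve; rewrite epq !inE => /orP [] /eqP ve.
  exact: unrespected (esym ve) apq resp.
by apply: unrespected (esym ve) _ (respects_sym resp); rewrite adjacent_sym.
Qed.

Lemma Fix_extension M S S' :
  pseudomatching H M -> Vars S = VH H :\: bigcupM M -> comfortable1 H S M ->
  consistent S' -> S \subset S' -> Fix H S' = Fix H S.
Proof.
move=> pm vars comf cons sub; apply/eqP.
rewrite eqEsubset (Fix_subset sub) andbT.
apply/subsetP => l /in_Fix [i [j fx]]; apply/in_Fix; exists i, j.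
apply: (fixed_by_restrict sub cons _ fx) => v vp.
by rewrite vars in_setD (fixed_by_unmatched pm comf sub cons fx vp) (pathV_VH vp).
Qed.

End Forest.

Theorem lemma12 (V : finType) (H : forest V) (M : {set {set V}})
  (S : {set V * bool}) :
  binary_tree_based H ->
  pseudomatching H M ->
  consistent S ->
  Vars S = VH H :\: bigcupM M ->
  comfortable1 H S M ->
  forall S' : {set V * bool}, EC H S S' ->
    prob H S' = ((1 / 2) ^+ #|VH H :\: Fix H S|)%R.
Proof.
move=> btb pm _ vars comf S' [[cons _ _] sub].
by rewrite /prob (Fix_extension btb pm vars comf cons sub).
Qed.
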